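(* Fix integers $s \geq 2$ and $q \ge 1$, and let $\mathcal{F} \subseteq Z_s^q$ be a $\{0,1\}$-covering family of vectors. Then $|\mathcal{F}| \leq 2^{q-1}$. For $s=2$ equality can be attained, i.e. there is a $\{0,1\}$-covering family in $Z_2^q$ of size $2^{q-1}$.
   Context: Let $Z_s$ be the ring of integers modulo $s$. For $A \subseteq Z_s$, a vector $v=(v_1,\dots,v_q)\in Z_s^q$ is $A$-covering if for every $a \in A$ there is $1 \le i \le q$ with $v_i = a$. A family $\mathcal{F} \subseteq Z_s^q$ is $A$-covering if for every ordered pair of distinct vectors $u,v \in \mathcal{F}$ the difference $u-v$ is $A$-covering. *)

From mathcomp Require Import all_boot all_algebra.
Set Implicit Arguments. Unset Strict Implicit. Unset Printing Implicit Defensive.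
Import GRing.Theory.
Local Open Scope ring_scope.

(* Z_s is 'Z_s (ring of integers modulo s, meaningful for 1 < s);
   vectors of Z_s^q are finite functions 'I_q -> 'Z_s. *)
Definition vec (s q : nat) := {ffun 'I_q -> 'Z_s}.

Definition covering_vec (s q : nat) (A : {set 'Z_s}) (v : vec s q) : bool :=
  [forall a in A, [exists i : 'I_q, v i == a]].

Definition covering_family (s q : nat) (A : {set 'Z_s}) (F : {set vec s q}) : bool :=
  [forall u in F, forall v in F, (u != v) ==> covering_vec A (u - v)].

Definition A01 (s : nat) : {set 'Z_s} := [set 0; 1].

From mathcomp Require Import all_boot all_algebra.
Set Implicit Arguments. Unset Strict Implicit. Unset Printing Implicit Defensive.
Import GRing.Theory Num.Theory.
Local Open Scope ring_scope.

(* Double F to F ∪ (F + 1), indexing it by the pairs (v, b) that stand for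
   v + b; the partner x' of a member x is the other element of its pair.  The
   covering property says that y' agrees with x in some coordinate whenever
   x <> y, while x' differs from x in every coordinate.  So the polynomials
   P_x(z) = \prod_i (z_i - x_i) over Q satisfy P_x(y') <> 0 iff x = y.
   Expanding each P_x over the 2^q subsets of coordinates factors the
   invertible diagonal matrix (P_x(y'))_(x,y) through a space of dimension
   2^q, whence 2|F| <= 2^q.  For s = 2, the vectors with first coordinate 0
   form a {0,1}-covering family of size 2^(q-1). *)

Lemma leq_of_unitmx_mulmx (K : fieldType) m n (A : 'M[K]_(m, n)) (B : 'M_(n, m)) :
  A *m B \in unitmx -> (m <= n)%N.
Proof. by move=> /mxrank_unit <-; exact: leq_trans (mxrankM_maxl A B) (rank_leq_col A). Qed.

Lemma card_le_exp2_of_meet_in_field (K : fieldType) (T : finType) (H : {set T}) q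
    (h g : T -> 'I_q -> K) :
  {in H &, forall x y, x != y -> exists i, g y i = h x i} ->
  {in H, forall x i, g x i != h x i} ->
  (#|H| <= 2 ^ q)%N.
Proof.
move=> meet avoid.
pose x_ (k : 'I_#|H|) : T := enum_val k.
pose S_ (j : 'I_#|{set 'I_q}|) : {set 'I_q} := enum_val j.
pose A := \matrix_(k, j) \prod_i (if i \in S_ j then 1 else - h (x_ k) i).
pose B := \matrix_(j, l) \prod_i (if i \in S_ j then g (x_ l) i else 1).
have mulABE k l : (A *m B) k l = \prod_i (g (x_ l) i - h (x_ k) i).
  rewrite mxE bigA_distr (big_enum_val (fun S => \prod_i _)) /=.
  apply: eq_bigr => j _; rewrite !mxE -big_split /=.
  by apply: eq_bigr => i _; case: ifP; rewrite ?mul1r ?mulr1.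
have mulAB : A *m B = diag_mx (\row_l \prod_i (g (x_ l) i - h (x_ l) i)).
  apply/matrixP => k l; rewrite mulABE !mxE.
  have [-> | neq_kl] := eqVneq k l; first by rewrite mulr1n.
  have neq_x : x_ k != x_ l by apply: contra neq_kl => /eqP /enum_val_inj ->.
  have [i gh] := meet _ _ (enum_valP k) (enum_valP l) neq_x.
  by rewrite mulr0n (bigD1 i) //= gh subrr mul0r.
have -> : (2 ^ q = #|{set 'I_q}|)%N.
  by rewrite -cardsT -powersetT card_powerset cardsT card_ord.
apply: (leq_of_unitmx_mulmx (A := A) (B := B)).
rewrite unitmxE mulAB det_diag unitfE; apply/prodf_neq0 => l _.
by rewrite mxE; apply/prodf_neq0 => i _; rewrite subr_eq0 avoid ?enum_valP.
Qed.

Lemma card_le_exp2_of_meet (T : finType) (E : countType) (H : {set T}) q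
    (h g : T -> 'I_q -> E) :
  {in H &, forall x y, x != y -> exists i, g y i = h x i} ->
  {in H, forall x i, g x i != h x i} ->
  (#|H| <= 2 ^ q)%N.
Proof.
move=> meet avoid; pose rat_of (e : E) : rat := (pickle e)%:R.
apply: (@card_le_exp2_of_meet_in_field _ _ H q (fun x i => rat_of (h x i))
                                             (fun x i => rat_of (g x i))).
- by move=> x y xH yH neq_xy; have [i gh] := meet x y xH yH neq_xy; exists i; rewrite gh.
- by move=> x xH i; rewrite eqr_nat (inj_eq (pcan_inj pickleK)) avoid.
Qed.

Section CoveringFamily.

Variables (s q : nat) (F : {set vec s q}).
Hypothesis covF : covering_family (A01 s) F.

Lemma covering01_diff u v : u \in F -> v \in F -> u != v ->
  forall a, a \in A01 s -> exists i, u i = v i + a.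
Proof.
move=> uF vF neq_uv a aA.
have := forallP covF u; rewrite uF => /forallP/(_ v); rewrite vF neq_uv.
move=> /forallP/(_ a); rewrite aA => /existsP [i /eqP uv_i].
by exists i; rewrite -uv_i !ffunE addrC subrK.
Qed.

Lemma covering01_agree u v : (0 < q)%N -> u \in F -> v \in F -> exists i, u i = v i.
Proof.
move=> q_gt0 uF vF; have [<- | neq_uv] := eqVneq u v; first by exists (Ordinal q_gt0).
have [i uv_i] := covering01_diff uF vF neq_uv (setU11 _ _).
by exists i; rewrite uv_i addr0.
Qed.

Lemma covering01_step u v : u \in F -> v \in F -> u != v -> exists i, u i = v i + 1.
Proof. by move=> uF vF neq_uv; apply: covering01_diff; rewrite ?setU11 ?inE ?eqxx ?orbT. Qed.

Lemma covering01_meet u v b c : (0 < q)%N -> u \in F -> v \in F -> (u, b) != (v, c) ->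
  exists i, v i + (~~ c)%:R = u i + b%:R.
Proof.
move=> q_gt0 uF vF; rewrite xpair_eqE.
case: b c => [] [] /= neq; rewrite ?andbT in neq.
2,3: by have [i vu_i] := covering01_agree q_gt0 vF uF; exists i; rewrite vu_i.
- rewrite eq_sym in neq.
  by have [i vu_i] := covering01_step vF uF neq; exists i; rewrite vu_i addr0.
- by have [i uv_i] := covering01_step uF vF neq; exists i; rewrite uv_i addr0.
Qed.

End CoveringFamily.

Lemma covering01_double_card_le s q (F : {set vec s q}) :
  (0 < q)%N -> covering_family (A01 s) F -> (#|F| * 2 <= 2 ^ q)%N.
Proof.
move=> q_gt0 covF.
have -> : (#|F| * 2 = #|setX F [set: bool]|)%N by rewrite cardsX cardsT card_bool.
pose h (x : vec s q * bool) i := x.1 i + x.2%:R.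
pose g (x : vec s q * bool) i := x.1 i + (~~ x.2)%:R.
apply: (@card_le_exp2_of_meet _ _ _ q h g).
- move=> [u b] [v c]; rewrite !inE !andbT; exact: covering01_meet.
- move=> [v b] _ i; rewrite /h /g (inj_eq (addrI _)).
  by case: b; rewrite ?oner_eq0 // eq_sym oner_eq0.
Qed.

Lemma Z2_neq0_eq1 (x : 'Z_2) : x != 0 -> x = 1.
Proof. by case: x => [[|[|]]] //= lt_x _; apply: val_inj. Qed.

Lemma covering01_Z2_of_zero_coord q (F : {set vec 2 q}) (i0 : 'I_q) :
  {in F, forall v : vec 2 q, v i0 = 0} -> covering_family (A01 2) F.
Proof.
move=> zero_i0; apply/forallP => u; apply/implyP => uF.
apply/forallP => v; apply/implyP => vF; apply/implyP => neq_uv.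
apply/forallP => a; apply/implyP; rewrite !inE => /orP [] /eqP ->; apply/existsP.
  by exists i0; rewrite !ffunE !zero_i0 ?subrr.
have [i neq_i] : exists i, u i != v i.
  apply/existsP; apply: contraNT neq_uv => /existsPn eq_uv.
  by apply/eqP/ffunP => i; apply/eqP/negbNE/eq_uv.
by exists i; rewrite (@Z2_neq0_eq1 ((u - v) i)) // !ffunE subr_eq0.
Qed.

Definition cons0 n (w : {ffun 'I_n -> 'Z_2}) : vec 2 n.+1 :=
  [ffun i => if unlift ord0 i is Some j then w j else 0].

Lemma cons0_inj n : injective (@cons0 n).
Proof.
move=> w w' eq_w; apply/ffunP => j.
by have := congr1 (fun v : vec 2 n.+1 => v (lift ord0 j)) eq_w; rewrite /= !ffunE liftK.
Qed.

Lemma covering01_Z2_extremal q : (0 < q)%N ->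
  exists F : {set vec 2 q}, covering_family (A01 2) F /\ #|F| = (2 ^ (q - 1))%N.
Proof.
case: q => // n _; exists [set cons0 w | w : {ffun 'I_n -> 'Z_2}]; split.
  apply: (covering01_Z2_of_zero_coord (i0 := ord0)) => _ /imsetP [w _ ->].
  by rewrite ffunE unlift_none.
by rewrite card_imset ?card_ffun ?card_ord ?subn1 //; exact: cons0_inj.
Qed.

Local Close Scope ring_scope.

Theorem proposition3p1 :
  (forall (s q : nat), 1 < s -> 0 < q ->
     forall F : {set vec s q}, covering_family (A01 s) F ->
       #|F| <= 2 ^ (q - 1))
  /\
  (forall q : nat, 0 < q ->
     exists F : {set vec 2 q}, covering_family (A01 2) F /\ #|F| = 2 ^ (q - 1)).
Proof.
split; last exact: covering01_Z2_extremal.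
move=> s q _ q_gt0 F covF.
rewrite -(leq_pmul2r (isT : 0 < 2)) -expnSr subn1 prednK //.
exact: covering01_double_card_le.
Qed.
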